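(* Let $\pi$ be a rigid $321$-avoiding permutation and $\tau$ a $321$-avoiding permutation. A rigid mapping $f:\pi\to\tau$ is an embedding of $\pi$ into $\tau$ if and only if the problem set $P(f)$ is empty.
   Context: Permutations are identified with their sets of points $(i,\sigma(i))$ with the usual left/right/above/below relations; an embedding is an injective map between point sets preserving the relative horizontal and vertical order of every pair. $x^{\leftarrow}$, $x^{\downarrow}$ denote the points immediately left of / below $x$; $\bot$ means undefined and operators applied to $\bot$ give $\bot$. In a $321$-avoiding permutation $\sigma$, $x$ is upper if some point lies right of and below it, lower if some point lies left of and above it; $U_\sigma,L_\sigma$ are these (disjoint) sets, and $\sigma$ is rigid if $\sigma=U_\sigma\cup L_\sigma$. $T(x)\in\{U,L\}$ is the type of a rigid $x$. For $b\in\{U,L\}$, $y^{\rightarrow}_b$ is the leftmost element of $b_\sigma$ strictly right of $y$ and $y^{\uparrow}_b$ the lowest element of $b_\sigma$ strictly above $y$ ($\bot$ if none). On $U_\sigma$ and on $L_\sigma$, $x\le y$ iff $x=y$ or $y$ is above and right of $x$. A rigid mapping $f:\pi\to\tau$ maps $U_\pi$ into $U_\tau$ and $L_\pi$ into $L_\tau$. A point $x$ of $\pi$ is a problem for $f$ if either $x^{\leftarrow}\neq\bot$ and ($f(x^{\leftarrow})^{\rightarrow}_{T(x)}=\bot$ or $f(x)<f(x^{\leftarrow})^{\rightarrow}_{T(x)}$), or $x^{\downarrow}\neq\bot$ and ($f(x^{\downarrow})^{\uparrow}_{T(x)}=\bot$ or $f(x)<f(x^{\downarrow})^{\uparrow}_{T(x)}$);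 i.e. $f(x)<\max\{f(x^{\leftarrow})^{\rightarrow}_{T(x)},f(x^{\downarrow})^{\uparrow}_{T(x)}\}$, where an undefined bound arising from a defined neighbour counts as exceeding every element. $P(f)$ is the set of problems for $f$. *)

(* A permutation of length n is sigma : {perm 'I_n};
   its points are identified with their abscissae i : 'I_n,
   point i = (i, sigma i). *)
From mathcomp Require Import all_boot all_fingroup.
Set Implicit Arguments. Unset Strict Implicit. Unset Printing Implicit Defensive.

Section Defs.
Variable n : nat.
Implicit Types (s : {perm 'I_n}) (x y z : 'I_n).

Definition avoids321 s : Prop :=
  forall i j k : 'I_n, i < j -> j < k -> ~ (s k < s j /\ s j < s i).

Definition upper s x : bool := [exists y : 'I_n, (x < y) && (s y < s x)].
Definition lower s x : bool := [exists y : 'I_n, (y < x) && (s x < s y)].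

Definition rigid s : Prop := forall x, upper s x || lower s x.

(* types: b = true stands for U, b = false for L *)
Definition inType s (b : bool) x : bool := if b then upper s x else lower s x.
Definition typ s x : bool := upper s x.

Definition left_nb x : option 'I_n := [pick y : 'I_n | y.+1 == x].
Definition down_nb s x : option 'I_n := [pick y : 'I_n | (s y).+1 == s x].

Definition right_b s (b : bool) y : option 'I_n :=
  [pick z : 'I_n | [&& inType s b z, y < z &
     [forall w : 'I_n, (inType s b w && (y < w)) ==> (z <= w)]]].
Definition up_b s (b : bool) y : option 'I_n :=
  [pick z : 'I_n | [&& inType s b z, s y < s z &
     [forall w : 'I_n, (inType s b w && (s y < s w)) ==> (s z <= s w)]]].

Definition ltpt s x y : bool := (x < y) && (s x < s y).
End Defs.

Section Maps.
Variables m n : nat.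
Implicit Types (p : {perm 'I_m}) (t : {perm 'I_n}).

Definition embedding p t (f : 'I_m -> 'I_n) : Prop :=
  injective f /\
  forall x y : 'I_m, (x < y) = (f x < f y) /\ (p x < p y) = (t (f x) < t (f y)).

Definition rigid_mapping p t (f : 'I_m -> 'I_n) : Prop :=
  forall x : 'I_m, (upper p x -> upper t (f x)) /\ (lower p x -> lower t (f x)).

Definition problem p t (f : 'I_m -> 'I_n) (x : 'I_m) : bool :=
  (if left_nb x is Some l then
     (if right_b t (typ p x) (f l) is Some r then ltpt t (f x) r else true)
   else false)
  ||
  (if down_nb p x is Some d then
     (if up_b t (typ p x) (f d) is Some u then ltpt t (f x) u else true)
   else false).

Definition problems p t (f : 'I_m -> 'I_n) : pred 'I_m := fun x => problem p t f x.
End Maps.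

From mathcomp Require Import all_boot all_fingroup order.
Set Implicit Arguments. Unset Strict Implicit. Unset Printing Implicit Defensive.
Import Order.TTheory.

(* In a 321-avoiding permutation, points of the same type are ordered the
   same way horizontally and vertically.  Hence [x] is a problem for [f]
   exactly when [f x] fails to lie right of the image of [x]'s left neighbour
   or above the image of its lower neighbour.  So [P(f)] is empty iff [f]
   increases along consecutive abscissae and along consecutive ordinates,
   i.e. iff [f] is an embedding. *)

Section SameType.
Variables (n : nat) (t : {perm 'I_n}).
Hypothesis t321 : avoids321 t.

Lemma inType_ltE b (a c : 'I_n) :
  inType t b a -> inType t b c -> (t a < t c) = (a < c).
Proof.
have lt_same x y : inType t b x -> inType t b y -> x < y -> t x < t y.
  move=> bx byy lt_xy; case: (ltngtP (t x) (t y)) => // [lt_yx|/val_inj/perm_inj eq_xy].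
  - case: b bx byy => [_ | /existsP[z /andP[lt_zx lt_xz]] _].
      by case/existsP=> z /andP[lt_yz lt_zy]; case: (t321 lt_xy lt_yz).
    by case: (t321 lt_zx lt_xy).
  - by rewrite eq_xy ltnn in lt_xy.
move=> ba bc; case: (ltngtP a c) => [/(lt_same _ _ ba bc) //|lt_ca|/val_inj ->].
- by apply/negbTE; rewrite -leqNgt ltnW // lt_same.
- exact: ltnn.
Qed.

Lemma right_bP b (y r : 'I_n) : right_b t b y = Some r ->
  [/\ inType t b r, y < r & forall w, inType t b w -> y < w -> r <= w].
Proof.
rewrite /right_b; case: pickP => // z /and3P[bz lt_yz /forallP min_z] [<-].
by split=> // w bw lt_yw; have := min_z w; rewrite bw lt_yw.
Qed.

Lemma up_bP b (y u : 'I_n) : up_b t b y = Some u ->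
  [/\ inType t b u, t y < t u & forall w, inType t b w -> t y < t w -> t u <= t w].
Proof.
rewrite /up_b; case: pickP => // z /and3P[bz lt_yz /forallP min_z] [<-].
by split=> // w bw lt_yw; have := min_z w; rewrite bw lt_yw.
Qed.

Lemma right_b_None b (y w : 'I_n) :
  right_b t b y = None -> inType t b w -> w <= y.
Proof.
rewrite /right_b; case: pickP => // none _ bw; rewrite leqNgt; apply/negP => lt_yw.
have [z /andP[bz lt_yz] min_z] :=
  @arg_minnP _ w (fun v => inType t b v && (y < v)) val (introT andP (conj bw lt_yw)).
have := none z; rewrite bz lt_yz /=; move/negbT/negP; apply; apply/forallP => v.
by apply/implyP; apply: min_z.
Qed.

Lemma up_b_None b (y w : 'I_n) :
  up_b t b y = None -> inType t b w -> t w <= t y.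
Proof.
rewrite /up_b; case: pickP => // none _ bw; rewrite leqNgt; apply/negP => lt_yw.
have [z /andP[bz lt_yz] min_z] := @arg_minnP _ w
  (fun v => inType t b v && (t y < t v)) (fun v => val (t v)) (introT andP (conj bw lt_yw)).
have := none z; rewrite bz lt_yz /=; move/negbT/negP; apply; apply/forallP => v.
by apply/implyP; apply: min_z.
Qed.

Lemma right_problemE b (y z : 'I_n) : inType t b z ->
  (if right_b t b y is Some r then ltpt t z r else true) = (z <= y).
Proof.
move=> bz; case Er: (right_b t b y) => [r|]; last by rewrite (right_b_None Er bz).
have [br lt_yr min_r] := right_bP Er.
rewrite /ltpt (inType_ltE bz br) andbb.
case: (leqP z y) => [le_zy | lt_yz]; first exact: leq_ltn_trans lt_yr.
by apply/negbTE; rewrite -leqNgt min_r.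
Qed.

Lemma up_problemE b (y z : 'I_n) : inType t b z ->
  (if up_b t b y is Some u then ltpt t z u else true) = (t z <= t y).
Proof.
move=> bz; case Eu: (up_b t b y) => [u|]; last by rewrite (up_b_None Eu bz).
have [bu lt_yu min_u] := up_bP Eu.
rewrite /ltpt -(inType_ltE bz bu) andbb.
case: (leqP (t z) (t y)) => [le_zy | lt_yz]; first exact: leq_ltn_trans lt_yu.
by apply/negbTE; rewrite -leqNgt min_u.
Qed.

End SameType.

Lemma left_nbP m (x l : 'I_m) : left_nb x = Some l -> l.+1 = x.
Proof. by rewrite /left_nb; case: pickP => // z /eqP eq_zx [<-]. Qed.

Lemma down_nbP m (p : {perm 'I_m}) (x d : 'I_m) : down_nb p x = Some d -> (p d).+1 = p x.
Proof. by rewrite /down_nb; case: pickP => // z /eqP eq_zx [<-]. Qed.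

Lemma left_nb_succ m (l x : 'I_m) : l.+1 = x -> left_nb x = Some l.
Proof.
move=> lx; rewrite /left_nb; case: pickP => [z /eqP zx | /(_ l)]; last by rewrite lx eqxx.
by congr Some; apply/val_inj/succn_inj; rewrite zx lx.
Qed.

Lemma down_nb_succ m (p : {perm 'I_m}) (d x : 'I_m) :
  (p d).+1 = p x -> down_nb p x = Some d.
Proof.
move=> dx; rewrite /down_nb; case: pickP => [z /eqP zx | /(_ d)]; last by rewrite dx eqxx.
by congr Some; apply: (perm_inj (s := p)); apply/val_inj/succn_inj; rewrite zx dx.
Qed.

Lemma homo_ltn_ord_succ m (g : 'I_m -> nat) :
  (forall a b : 'I_m, a.+1 = b -> g a < g b) -> {homo g : a b / a < b}.
Proof.
move=> g_succ a [b lt_bm]; elim: b lt_bm => // b IH lt_b1m.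
have lt_bm : b < m := ltnW lt_b1m.
have g_b : g (Ordinal lt_bm) < g (Ordinal lt_b1m) by apply: g_succ.
rewrite ltnS leq_eqVlt => /predU1P[eq_ab | lt_ab].
  by rewrite (_ : a = Ordinal lt_bm) //; apply: val_inj.
exact: ltn_trans (IH lt_bm lt_ab) g_b.
Qed.

Section Rigid.
Variables (m n : nat) (p : {perm 'I_m}) (t : {perm 'I_n}) (f : 'I_m -> 'I_n).

Lemma rigid_mapping_typ x :
  rigid p -> rigid_mapping p t f -> inType t (typ p x) (f x).
Proof.
move=> rigid_p fR; rewrite /inType /typ; case Ux: (upper p x); first exact: (fR x).1.
by apply: (fR x).2; have := rigid_p x; rewrite Ux.
Qed.

Lemma problemE x : avoids321 t -> inType t (typ p x) (f x) ->
  problem p t f x =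
    (if left_nb x is Some l then f x <= f l else false)
    || (if down_nb p x is Some d then t (f x) <= t (f d) else false).
Proof.
move=> t321 bx; rewrite /problem.
by case: (left_nb x) => [l|]; case: (down_nb p x) => [d|];
  rewrite ?(right_problemE _ _ bx) ?(up_problemE _ _ bx).
Qed.

Lemma embedding_succ :
  (forall a b : 'I_m, a.+1 = b -> f a < f b) ->
  (forall a b : 'I_m, (p a).+1 = p b -> t (f a) < t (f b)) ->
  embedding p t f.
Proof.
move=> f_succ tf_succ.
have f_homo : {homo (fun a => val (f a)) : a b / a < b}.
  exact: homo_ltn_ord_succ.
have f_mono : {mono (fun a => val (f a)) : a b / a < b}.
  exact: leW_mono (le_mono f_homo).
pose h a := val (t (f ((p^-1)%g a))).
have h_mono : {mono h : a b / a < b}.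
  apply: leW_mono (le_mono _); apply: homo_ltn_ord_succ => a b ab.
  by apply: tf_succ; rewrite !permKV.
split=> [a b /(congr1 val) | a b]; first exact: (inc_inj (le_mono f_homo)).
by split; [rewrite f_mono | rewrite -h_mono /h !permK].
Qed.

End Rigid.

Theorem corollary1 (m n : nat) (p : {perm 'I_m}) (t : {perm 'I_n})
  (f : 'I_m -> 'I_n) :
  avoids321 p -> rigid p -> avoids321 t -> rigid_mapping p t f ->
  (embedding p t f <-> (forall x : 'I_m, ~~ problems p t f x)).
Proof.
move=> _ rigid_p t321 fR.
have typ_f x := rigid_mapping_typ x rigid_p fR.
split=> [[_ f_emb] x | no_problem].
- rewrite /problems (problemE t321 (typ_f x)) negb_or.
  apply/andP; split.
  + case El: (left_nb x) => [l|] //.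
    by rewrite -ltnNge -(f_emb l x).1 -(left_nbP El).
  + case Ed: (down_nb p x) => [d|] //.
    by rewrite -ltnNge -(f_emb d x).2 -(down_nbP Ed).
- apply: embedding_succ => a b ab; move: (no_problem b);
    rewrite /problems (problemE t321 (typ_f b)) negb_or.
  + by rewrite (left_nb_succ ab) -ltnNge => /andP[].
  + by rewrite (down_nb_succ ab) -ltnNge => /andP[].
Qed.
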